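(* Let $L_{\mathcal{F}}$ and $L_{\mathcal{R}}$ be Lipschitz constants of $\mathcal{F}$ and $\mathcal{R}$ over $\Omega_\theta$, and suppose $\beta>L_{\mathcal{F}}+L_{\mathcal{R}}$. If $\bar z\in\Omega_\theta$ is a local minimizer of problem (R) or of problem (LRP), then $\bar z$ is also a local minimizer of problem (RP). If $\bar z\in\Omega_\theta\cap\Omega_3$ is a local minimizer of problem (RP), then $\bar z$ is also a local minimizer of problem (LRP).
   Context: Let $N,N_0,N_1$ be positive integers, $X=(x_1,\ldots,x_N)\in\mathbb{R}^{N_0\times N}$ a given data matrix, and $\lambda_1,\lambda_2,\beta>0$ given parameters. For a real vector $y$, $(y)_+=\max\{y,0\}$ componentwise; $e$ denotes the all-ones vector of $\mathbb{R}^{N_1}$. For a matrix $Y$, $\|Y\|_F$ is the Frobenius norm and $\|Y\|_1$ the maximum absolute column sum. The variable is $z=(\mathrm{vec}(W)^\top,b^\top,\mathrm{vec}(V)^\top)^\top\in\mathbb{R}^{N_2}$, $N_2=N_0N_1+N_1+N_0+N_1N$, where $W\in\mathbb{R}^{N_1\times N_0}$, $b=(b_1^\top,b_2^\top)^\top$ with $b_1\in\mathbb{R}^{N_1}$, $b_2\in\mathbb{R}^{N_0}$, $V=(v_1,\ldots,v_N)\in\mathbb{R}^{N_1\times N}$, and vec is columnwise vectorization. Define $\mathcal{F}(z)=\frac1N\sum_{n=1}^N\|(W^\top v_n+b_2)_+-x_n\|_2^2$, $\mathcal{R}(z)=\lambda_1\sum_{n=1}^N e^\top v_n+\lambda_2\|W\|_F^2$,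 $\mathcal{P}(z)=\beta\sum_{n=1}^N e^\top(v_n-(Wx_n+b_1)_+)$, and $\mathcal{O}=\mathcal{F}+\mathcal{R}+\mathcal{P}$. Let $\Omega_1=\{z: v_n=(Wx_n+b_1)_+,\ n=1,\ldots,N\}$, $\Omega_2=\{z: v_n\ge (Wx_n+b_1)_+,\ n=1,\ldots,N\}$. Fix $\theta>\frac1N\|X\|_F^2$ and set $\alpha=\max\left\{\frac{\theta}{\lambda_1}+\sqrt{\frac{N_1N_0\theta}{\lambda_2}}\|X\|_1,\ \frac{\theta\sqrt{N_1N_0\theta}}{\lambda_1\sqrt{\lambda_2}}+\sqrt{N\theta}+\|X\|_1\right\}$. Let $\Omega_3=\{z:\|b\|_\infty\le\alpha\}$, $\mathcal{Z}=\Omega_2\cap\Omega_3$, $\Omega_\theta=\{z\in\Omega_2:\mathcal{O}(z)\le\theta\}$. Problem (R): minimize $\mathcal{F}(z)+\mathcal{R}(z)$ subject to $z\in\Omega_1$. Problem (RP): minimize $\mathcal{O}(z)$ subject to $z\in\Omega_2$. Problem (LRP): minimize $\mathcal{O}(z)$ subject to $z\in\mathcal{Z}$. *)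

From HB Require Import structures.
From mathcomp Require Import all_boot all_order all_algebra.
From mathcomp Require Import reals.
Set Implicit Arguments. Unset Strict Implicit. Unset Printing Implicit Defensive.
Import Order.TTheory GRing.Theory Num.Theory.
Local Open Scope ring_scope.

Section Defs.
Variables (R : realType) (N N0 N1 : nat).

(* The variable z = (vec W, b = (b1;b2), vec V). *)
Record param := Param {
  pW  : 'M[R]_(N1, N0);
  pb1 : 'cV[R]_N1;
  pb2 : 'cV[R]_N0;
  pV  : 'M[R]_(N1, N) }.

Definition relu (x : R) : R := Num.max x 0.

Definition frob2 m n (A : 'M[R]_(m, n)) : R := \sum_(i < m) \sum_(j < n) A i j ^+ 2.

Definition pdist (z z' : param) : R :=
  Num.sqrt (frob2 (pW z - pW z') + frob2 (pb1 z - pb1 z')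
          + frob2 (pb2 z - pb2 z') + frob2 (pV z - pV z')).

Definition mnorm1 (X : 'M[R]_(N0, N)) : R :=
  \big[Num.max/0]_(n < N) \sum_(i < N0) `|X i n|.

Variables (X : 'M[R]_(N0, N)) (lam1 lam2 beta : R).

Definition objF (z : param) : R :=
  N%:R^-1 * \sum_(n < N) \sum_(i < N0)
     (relu (((pW z)^T *m pV z) i n + pb2 z i 0) - X i n) ^+ 2.

Definition objR (z : param) : R :=
  lam1 * \sum_(n < N) \sum_(j < N1) pV z j n + lam2 * frob2 (pW z).

Definition objP (z : param) : R :=
  beta * \sum_(n < N) \sum_(j < N1)
     (pV z j n - relu ((pW z *m X) j n + pb1 z j 0)).

Definition objO (z : param) : R := objF z + objR z + objP z.

Definition Omega1 (z : param) : Prop :=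
  forall (n : 'I_N) (j : 'I_N1), pV z j n = relu ((pW z *m X) j n + pb1 z j 0).

Definition Omega2 (z : param) : Prop :=
  forall (n : 'I_N) (j : 'I_N1), relu ((pW z *m X) j n + pb1 z j 0) <= pV z j n.

Variable theta : R.

Definition alpha : R :=
  Num.max (theta / lam1 + Num.sqrt ((N1 * N0)%:R * theta / lam2) * mnorm1 X)
          (theta * Num.sqrt ((N1 * N0)%:R * theta) / (lam1 * Num.sqrt lam2)
           + Num.sqrt (N%:R * theta) + mnorm1 X).

Definition Omega3 (z : param) : Prop :=
  (forall j : 'I_N1, `|pb1 z j 0| <= alpha) /\ (forall i : 'I_N0, `|pb2 z i 0| <= alpha).

Definition Zset (z : param) : Prop := Omega2 z /\ Omega3 z.

Definition Omega_theta (z : param) : Prop := Omega2 z /\ objO z <= theta.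

End Defs.

Definition local_min (R : realType) (N N0 N1 : nat)
  (f : param R N N0 N1 -> R) (S : param R N N0 N1 -> Prop) (zb : param R N N0 N1) : Prop :=
  S zb /\ exists eps : R, 0 < eps /\
    forall z, S z -> pdist z zb < eps -> f zb <= f z.

Definition lipschitz_on (R : realType) (N N0 N1 : nat)
  (f : param R N N0 N1 -> R) (S : param R N N0 N1 -> Prop) (L : R) : Prop :=
  0 <= L /\ forall z z', S z -> S z' -> `|f z - f z'| <= L * pdist z z'.

(* For (R): take z in Omega2 close to zb with objO z < theta and move V linearly from the
   activations (W x_n + b1)_+, which give a point proj z of Omega1, to z itself. On this
   path the penalty equals beta t slack(z) and the distance to z is at most
   (1 - t) slack(z), so wherever the path lies in Omega_theta the Lipschitz bounds and
   beta > LF + LR give objO <= objO z. Since objO is Lipschitz in t it cannot jump over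
   the gap (objO z, theta], so the whole path stays in Omega_theta and
   objO (proj z) <= objO z. The projection is Lipschitz, hence proj z is close to zb, and
   a local minimizer of (R) satisfies objO zb = (objF + objR) zb <= objO (proj z).
   For (LRP): on Omega_theta the pre-activations W x_n, W^T v_n and the biases are at
   most alpha, so raising every bias to at least -alpha changes no ReLU, hence not objO;
   it lands in Omega3 and does not increase the distance to any zb in Omega3. The last
   claim holds because Zset is contained in Omega2. *)

From HB Require Import structures.
From mathcomp Require Import all_boot all_order all_algebra.
From mathcomp Require Import reals ring lra.
Import Order.TTheory GRing.Theory Num.Theory.
Local Open Scope ring_scope.
Set Implicit Arguments. Unset Strict Implicit. Unset Printing Implicit Defensive.

Section RealFacts.
Variable R : realType.
Implicit Types a b c u x : R.

Lemma ler_sum_term (I : finType) (F : I -> R) i :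
  (forall j, 0 <= F j) -> F i <= \sum_j F j.
Proof. by move=> F_ge0; rewrite (bigD1 i) //= lerDl sumr_ge0. Qed.

Lemma relu_ge0 x : 0 <= relu x.
Proof. by rewrite le_max lexx orbT. Qed.

Lemma relu_ge x : x <= relu x.
Proof. by rewrite le_max lexx. Qed.

Lemma relu_dist_le a b : `|relu a - relu b| <= `|a - b|.
Proof.
have := ler_norm (a - b); have := ler_norm (b - a); rewrite distrC => h1 h2.
rewrite /relu ler_norml; case: (leP a 0) => ha; case: (leP b 0) => hb;
  apply/andP; split; lra.
Qed.

Lemma relu_addr_clamp u b a : u <= a -> relu (u + Num.max b (- a)) = relu (u + b).
Proof.
move=> ua; case: (leP b (- a)) => // hb.
by rewrite /relu !max_r //; lra.
Qed.

Lemma clamp_sqr_dist b c a : `|c| <= a -> (Num.max b (- a) - c) ^+ 2 <= (b - c) ^+ 2.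
Proof.
rewrite ler_norml => /andP[ca ca']; case: (leP b (- a)) => // hb; nra.
Qed.

Lemma norm_clamp_le b a : b <= a -> 0 <= a -> `|Num.max b (- a)| <= a.
Proof. by move=> ba a0; rewrite ler_norml le_max lexx orbT ge_max ba /=; lra. Qed.

End RealFacts.

Section Lipschitz01.
Variable R : realType.
Implicit Types (f g : R -> R) (a c : R).

Definition lipschitz01 f : Prop :=
  exists2 K : R, 0 <= K &
    forall t s, 0 <= t <= 1 -> 0 <= s <= 1 -> `|f t - f s| <= K * `|t - s|.

Lemma eq_lipschitz01 f g : f =1 g -> lipschitz01 g -> lipschitz01 f.
Proof. by move=> fg [K K0 gK]; exists K => // t s ht hs; rewrite !fg gK. Qed.

Lemma lipschitz01_cst c : lipschitz01 (fun=> c).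
Proof. by exists 0 => // t s _ _; rewrite subrr normr0 mul0r. Qed.

Lemma lipschitz01_affine a c : lipschitz01 (fun t => a + t * c).
Proof.
exists `|c| => // t s _ _.
rewrite (_ : _ - _ = (t - s) * c); last by ring.
by rewrite normrM mulrC.
Qed.

Lemma lipschitz01D f g :
  lipschitz01 f -> lipschitz01 g -> lipschitz01 (fun t => f t + g t).
Proof.
move=> [K K0 fK] [L L0 gL]; exists (K + L) => [|t s ht hs]; first exact: addr_ge0.
rewrite (_ : _ - _ = (f t - f s) + (g t - g s)); last by ring.
by rewrite mulrDl (le_trans (ler_normD _ _)) // lerD ?fK ?gL.
Qed.

Lemma lipschitz01M c f : lipschitz01 f -> lipschitz01 (fun t => c * f t).
Proof.
move=> [K K0 fK]; exists (`|c| * K) => [|t s ht hs]; first exact: mulr_ge0.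
by rewrite -mulrBr normrM -mulrA ler_wpM2l ?fK.
Qed.

Lemma lipschitz01_sum (I : finType) (F : I -> R -> R) :
  (forall i, lipschitz01 (F i)) -> lipschitz01 (fun t => \sum_i F i t).
Proof.
move=> /fin_all_exists2[K K0 FK]; exists (\sum_i K i) => [|t s ht hs].
  exact: sumr_ge0.
rewrite -sumrB mulr_suml (le_trans (ler_norm_sum _ _ _)) //.
by apply: ler_sum => i _; apply: FK.
Qed.

Lemma lipschitz01_relu f : lipschitz01 f -> lipschitz01 (fun t => relu (f t)).
Proof.
by move=> [K K0 fK]; exists K => // t s ht hs; rewrite (le_trans (relu_dist_le _ _)) ?fK.
Qed.

Lemma lipschitz01_sqr f : lipschitz01 f -> lipschitz01 (fun t => f t ^+ 2).
Proof.
move=> [K K0 fK]; set B := `|f 0| + K.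
have fB t : 0 <= t <= 1 -> `|f t| <= B.
  move=> /[dup] ht /andP[t0 t1]; rewrite -[f t](subrK (f 0)) /B addrC.
  rewrite (le_trans (ler_normD _ _)) // lerD2l (le_trans (fK _ _ ht _)) ?lexx ?ler01 //.
  by rewrite subr0 ger0_norm // ler_piMr.
exists (2 * B * K) => [|t s ht hs]; first by rewrite !mulr_ge0 ?addr_ge0.
rewrite subr_sqr normrM (_ : 2 * B * K * _ = K * `|t - s| * (2 * B)); last by ring.
rewrite ler_pM ?normr_ge0 ?fK //.
by have := ler_normD (f t) (f s); have := fB t ht; have := fB s hs; lra.
Qed.

(* Walking down the grid [t = 1 - k/m], each step moves [g] by less than the gap
   [th - g 1], so [g] can never jump over [(g 1, th]]. *)
Lemma lipschitz01_no_gap_crossing g th :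
  lipschitz01 g -> g 1 < th ->
  (forall t, 0 <= t <= 1 -> g t <= th -> g t <= g 1) -> g 0 <= g 1.
Proof.
move=> [K K0 gK] g1_lt below.
have gap_gt0 : 0 < th - g 1 by rewrite subr_gt0.
set m := Num.bound (K / (th - g 1)).
have m_gt0 : 0 < m%:R :> R by rewrite ltr0n.
have step_lt : K / m%:R < th - g 1.
  rewrite ltr_pdivrMr // mulrC -ltr_pdivrMr //.
  exact: archi_boundP (divr_ge0 K0 (ltW gap_gt0)).
pose t k : R := 1 - k%:R / m%:R.
have t_in k : (k <= m)%N -> 0 <= t k <= 1.
  move=> le_km; rewrite /t subr_ge0 gerBl divr_ge0 ?ler0n //= andbT.
  by rewrite ler_pdivrMr // mul1r ler_nat.
suff t_below k : (k <= m)%N -> g (t k) <= g 1.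
  by have := t_below m (leqnn m); rewrite /t divff ?subrr // gt_eqF.
elim: k => [|k IH] le_km; first by rewrite /t mul0r subr0.
have le_km' := ltnW le_km.
apply: below; first exact: t_in.
have dt : `|t k.+1 - t k| = m%:R^-1.
  by rewrite /t -natr1 (_ : _ - _ = - m%:R^-1) ?normrN ?gtr0_norm ?invr_gt0 //; ring.
have := gK _ _ (t_in _ le_km) (t_in _ le_km'); rewrite dt ler_norml => /andP[_].
by have := IH le_km'; lra.
Qed.

End Lipschitz01.

Section Frobenius.
Variable R : realType.

Lemma mxsubE m n (A B : 'M[R]_(m, n)) i j : (A - B) i j = A i j - B i j.
Proof. by rewrite !mxE. Qed.

Lemma frob2_ge0 m n (A : 'M[R]_(m, n)) : 0 <= frob2 A.
Proof. by apply: sumr_ge0 => i _; apply: sumr_ge0 => j _; apply: sqr_ge0. Qed.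

Lemma frob2Z m n c (A : 'M[R]_(m, n)) : frob2 (c *: A) = c ^+ 2 * frob2 A.
Proof.
rewrite /frob2 mulr_sumr; apply: eq_bigr => i _; rewrite mulr_sumr.
by apply: eq_bigr => j _; rewrite mxE exprMn.
Qed.

Lemma frob2_0 m n : frob2 (0 : 'M[R]_(m, n)) = 0.
Proof. by rewrite -(scale0r 0) frob2Z expr0n mul0r. Qed.

Lemma ler_frob2 m n (A B : 'M[R]_(m, n)) :
  (forall i j, A i j ^+ 2 <= B i j ^+ 2) -> frob2 A <= frob2 B.
Proof. by move=> AB; apply: ler_sum => i _; apply: ler_sum => j _. Qed.

Lemma sqr_entry_le_frob2 m n (A : 'M[R]_(m, n)) i j : A i j ^+ 2 <= frob2 A.
Proof.
have sqr_row_ge0 k : 0 <= \sum_l A k l ^+ 2 by apply: sumr_ge0 => l _; apply: sqr_ge0.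
by apply: le_trans (ler_sum_term i sqr_row_ge0); apply: ler_sum_term => l; apply: sqr_ge0.
Qed.

Lemma norm_entry_le_sqrt_frob2 m n (A : 'M[R]_(m, n)) i j :
  `|A i j| <= Num.sqrt (frob2 A).
Proof. by rewrite -sqrtr_sqr ler_wsqrtr // sqr_entry_le_frob2. Qed.

Lemma frob2_le_bound m n (A : 'M[R]_(m, n)) c :
  (forall i j, `|A i j| <= c) -> frob2 A <= (m * n)%:R * c ^+ 2.
Proof.
move=> Ac; apply: (@le_trans _ _ (\sum_(i < m) \sum_(j < n) c ^+ 2)).
  apply: ler_sum => i _; apply: ler_sum => j _.
  rewrite -real_normK ?num_real // ler_sqr ?nnegrE //.
  exact: le_trans (normr_ge0 _) (Ac i j).
by rewrite !sumr_const !card_ord mulr_natl mulrnA mulrnAC.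
Qed.

Lemma frob2_le_sqr_sum m n (A : 'M[R]_(m, n)) :
  (forall i j, 0 <= A i j) -> frob2 A <= (\sum_i \sum_j A i j) ^+ 2.
Proof.
move=> A0; have sum_ge0 i : 0 <= \sum_j A i j by apply: sumr_ge0.
rewrite expr2 mulr_suml; apply: ler_sum => i _; rewrite mulr_suml.
apply: ler_sum => j _; rewrite expr2 ler_wpM2l //.
exact: le_trans (ler_sum_term j (A0 i)) (ler_sum_term i sum_ge0).
Qed.

Lemma norm_mulmx_le m p n (A : 'M[R]_(m, p)) (B : 'M[R]_(p, n)) i j c :
  (forall k, `|A i k| <= c) -> `|(A *m B) i j| <= c * \sum_k `|B k j|.
Proof.
move=> Ac; rewrite mxE mulr_sumr (le_trans (ler_norm_sum _ _ _)) //.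
by apply: ler_sum => k _; rewrite normrM ler_wpM2r.
Qed.

Lemma col_le_mnorm1 N N0 (X : 'M[R]_(N0, N)) n : \sum_i `|X i n| <= mnorm1 X.
Proof. exact: (le_bigmax _ (fun n => \sum_i `|X i n|)). Qed.

Lemma mnorm1_ge0 N N0 (X : 'M[R]_(N0, N)) : 0 <= mnorm1 X.
Proof. exact: bigmax_ge_id. Qed.

End Frobenius.

Section ParamSpace.
Variables (R : realType) (N N0 N1 : nat).
Implicit Types z y zb : param R N N0 N1.

Lemma pdist_ge0 z y : 0 <= pdist z y.
Proof. exact: sqrtr_ge0. Qed.

Lemma pdist_sqr z y : pdist z y ^+ 2 = frob2 (pW z - pW y) + frob2 (pb1 z - pb1 y)
  + frob2 (pb2 z - pb2 y) + frob2 (pV z - pV y).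
Proof. by rewrite sqr_sqrtr // !addr_ge0 ?frob2_ge0. Qed.

Lemma norm_pW_le_pdist z y j i : `|(pW z - pW y) j i| <= pdist z y.
Proof.
apply: le_trans (norm_entry_le_sqrt_frob2 _ j i) _.
by apply: ler_wsqrtr; rewrite -!addrA lerDl !addr_ge0 ?frob2_ge0.
Qed.

Lemma norm_pb1_le_pdist z y j : `|(pb1 z - pb1 y) j 0| <= pdist z y.
Proof.
apply: le_trans (norm_entry_le_sqrt_frob2 _ j 0) _.
apply: ler_wsqrtr; have := frob2_ge0 (pW z - pW y).
by have := frob2_ge0 (pb2 z - pb2 y); have := frob2_ge0 (pV z - pV y); lra.
Qed.

Lemma local_min_sub (f : param R N N0 N1 -> R) (S T : param R N N0 N1 -> Prop) zb :
  (forall z, S z -> T z) -> S zb -> local_min f T zb -> local_min f S zb.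
Proof.
move=> ST Szb [_ [eps [eps_gt0 min_zb]]]; split=> //.
by exists eps; split=> // z /ST; apply: min_zb.
Qed.

End ParamSpace.

Section Model.
Variables (R : realType) (N N0 N1 : nat) (X : 'M[R]_(N0, N)).
Variables (lam1 lam2 beta theta : R).
Hypotheses (N_gt0 : (0 < N)%N) (N0_gt0 : (0 < N0)%N) (N1_gt0 : (0 < N1)%N).
Hypotheses (lam1_gt0 : 0 < lam1) (lam2_gt0 : 0 < lam2) (beta_gt0 : 0 < beta).

Local Notation param := (param R N N0 N1).
Local Notation objF := (objF X).
Local Notation objR := (@objR R N N0 N1 lam1 lam2).
Local Notation objP := (objP X beta).
Local Notation objO := (objO X lam1 lam2 beta).
Local Notation Omega1 := (Omega1 X).
Local Notation Omega2 := (Omega2 X).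
Local Notation Omega3 := (Omega3 X lam1 lam2 theta).
Local Notation Zset := (Zset X lam1 lam2 theta).
Local Notation Omega_theta := (Omega_theta X lam1 lam2 beta theta).
Local Notation alpha := (alpha N1 X lam1 lam2 theta).
Local Notation M := (mnorm1 X).
Local Notation proj_const := (Num.sqrt (1 + (N1 * N)%:R * (M + 1) ^+ 2)).
Implicit Types z zb : param.

Definition hidden z : 'M[R]_(N1, N) :=
  \matrix_(j, n) relu ((pW z *m X) j n + pb1 z j 0).

Lemma hiddenE z j n : hidden z j n = relu ((pW z *m X) j n + pb1 z j 0).
Proof. by rewrite mxE. Qed.

Definition slack z : R :=
  \sum_(n < N) \sum_(j < N1) (pV z j n - relu ((pW z *m X) j n + pb1 z j 0)).

Lemma objP_slack z : objP z = beta * slack z.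
Proof. by []. Qed.

Lemma slack_ge0 z : Omega2 z -> 0 <= slack z.
Proof. by move=> z2; apply: sumr_ge0 => n _; apply: sumr_ge0 => j _; rewrite subr_ge0. Qed.

Lemma slackE z : slack z = \sum_(j < N1) \sum_(n < N) (pV z - hidden z) j n.
Proof.
rewrite /slack exchange_big; apply: eq_bigr => j _.
by apply: eq_bigr => n _; rewrite !mxE.
Qed.

Lemma Omega1_hidden z : Omega1 z -> pV z = hidden z.
Proof. by move=> z1; apply/matrixP => j n; rewrite mxE z1. Qed.

Lemma objO_Omega1 z : Omega1 z -> objO z = objF z + objR z.
Proof.
move=> z1; rewrite /objO objP_slack /slack big1 ?mulr0 ?addr0 // => n _.
by rewrite big1 // => j _; rewrite z1 subrr.
Qed.

Lemma pV_ge0 z j n : Omega2 z -> 0 <= pV z j n.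
Proof. by move=> z2; apply: le_trans (relu_ge0 _) (z2 n j). Qed.

Lemma objF_ge0 z : 0 <= objF z.
Proof.
rewrite mulr_ge0 ?invr_ge0 ?ler0n //.
by apply: sumr_ge0 => n _; apply: sumr_ge0 => i _; apply: sqr_ge0.
Qed.

Lemma sqr_term_le_objF z i n :
  (relu (((pW z)^T *m pV z) i n + pb2 z i 0) - X i n) ^+ 2 <= N%:R * objF z.
Proof.
rewrite mulrA mulfV ?mul1r ?pnatr_eq0 -?lt0n //.
have row_ge0 m : 0 <= \sum_(k < N0) (relu (((pW z)^T *m pV z) k m + pb2 z k 0) - X k m) ^+ 2.
  by apply: sumr_ge0 => k _; apply: sqr_ge0.
by apply: le_trans (ler_sum_term n row_ge0); apply: ler_sum_term => k; apply: sqr_ge0.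
Qed.

Lemma sqrt_theta_lam2_le : 0 <= theta ->
  Num.sqrt (theta / lam2) <= Num.sqrt ((N1 * N0)%:R * theta / lam2).
Proof.
move=> theta_ge0; apply: ler_wsqrtr; rewrite -mulrA; apply: ler_peMl.
  exact: divr_ge0 theta_ge0 (ltW lam2_gt0).
by rewrite ler1n muln_gt0 N1_gt0.
Qed.

Lemma alpha_ge_bias1 : 0 <= theta -> theta / lam1 + Num.sqrt (theta / lam2) * M <= alpha.
Proof.
move=> theta_ge0; rewrite le_max; apply/orP; left; rewrite lerD2l.
by apply: ler_wpM2r; [exact: mnorm1_ge0 | exact: sqrt_theta_lam2_le].
Qed.

Lemma alpha_ge_bias2 : 0 <= theta ->
  M + Num.sqrt (N%:R * theta) + Num.sqrt (theta / lam2) * (theta / lam1) <= alpha.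
Proof.
move=> theta_ge0; rewrite le_max; apply/orP; right.
have -> : theta * Num.sqrt ((N1 * N0)%:R * theta) / (lam1 * Num.sqrt lam2)
    = Num.sqrt ((N1 * N0)%:R * theta / lam2) * (theta / lam1).
  by rewrite [Num.sqrt (_ / lam2)]sqrtrM ?mulr_ge0 // sqrtrV ?ltW // invfM; ring.
have := ler_wpM2r (divr_ge0 theta_ge0 (ltW lam1_gt0)) (sqrt_theta_lam2_le theta_ge0).
lra.
Qed.

Lemma alpha_ge0 : 0 <= theta -> 0 <= alpha.
Proof.
move=> theta_ge0; apply: le_trans (alpha_ge_bias1 theta_ge0).
exact: addr_ge0 (divr_ge0 theta_ge0 (ltW lam1_gt0)) (mulr_ge0 (sqrtr_ge0 _) (mnorm1_ge0 X)).
Qed.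

Section Sublevel.
Variable z : param.
Hypothesis z_theta : Omega_theta z.

Let z2 : Omega2 z. Proof. by case: z_theta. Qed.

Lemma sublevel_bounds :
  [/\ objF z <= theta, lam1 * \sum_(n < N) \sum_(j < N1) pV z j n <= theta
    & lam2 * frob2 (pW z) <= theta].
Proof.
have [_] := z_theta; rewrite /objO /objR objP_slack.
have := objF_ge0 z; have := mulr_ge0 (ltW beta_gt0) (slack_ge0 z2).
have := mulr_ge0 (ltW lam2_gt0) (frob2_ge0 (pW z)).
have : 0 <= lam1 * \sum_(n < N) \sum_(j < N1) pV z j n.
  apply: mulr_ge0 (ltW lam1_gt0) _.
  by apply: sumr_ge0 => n _; apply: sumr_ge0 => j _; apply: pV_ge0.
by move=> *; split; lra.
Qed.

Lemma theta_ge0 : 0 <= theta.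
Proof.
have [_ _ W_le] := sublevel_bounds.
exact: le_trans (mulr_ge0 (ltW lam2_gt0) (frob2_ge0 _)) W_le.
Qed.

Lemma pW_bound j i : `|pW z j i| <= Num.sqrt (theta / lam2).
Proof.
have [_ _ W_le] := sublevel_bounds.
rewrite -sqrtr_sqr; apply: ler_wsqrtr.
rewrite ler_pdivlMr // mulrC; apply: le_trans W_le.
by apply: ler_wpM2l; [exact: ltW | exact: sqr_entry_le_frob2].
Qed.

Lemma pV_col_bound n : \sum_(j < N1) pV z j n <= theta / lam1.
Proof.
have [_ V_le _] := sublevel_bounds.
have col_ge0 m : 0 <= \sum_(j < N1) pV z j m by apply: sumr_ge0 => j _; apply: pV_ge0.
rewrite ler_pdivlMr // mulrC; apply: le_trans V_le.
by apply: ler_wpM2l; [exact: ltW | exact: ler_sum_term].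
Qed.

Lemma norm_WX_bound j n : `|(pW z *m X) j n| <= Num.sqrt (theta / lam2) * M.
Proof.
apply: le_trans (norm_mulmx_le _ _ (pW_bound j)) _.
by rewrite ler_wpM2l ?sqrtr_ge0 ?col_le_mnorm1.
Qed.

Lemma norm_WtV_bound i n :
  `|((pW z)^T *m pV z) i n| <= Num.sqrt (theta / lam2) * (theta / lam1).
Proof.
have Wt_bound k : `|(pW z)^T i k| <= Num.sqrt (theta / lam2) by rewrite mxE pW_bound.
apply: le_trans (norm_mulmx_le _ _ Wt_bound) _; rewrite ler_wpM2l ?sqrtr_ge0 //.
under eq_bigr => j _ do rewrite ger0_norm ?pV_ge0 //.
exact: pV_col_bound.
Qed.

Let n0 : 'I_N := Ordinal N_gt0.

Lemma pb1_bound j : pb1 z j 0 <= theta / lam1 + Num.sqrt (theta / lam2) * M.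
Proof.
have := relu_ge ((pW z *m X) j n0 + pb1 z j 0); have := z2 n0 j.
have := le_trans (ler_sum_term j (fun k => pV_ge0 k n0 z2)) (pV_col_bound n0).
by have := norm_WX_bound j n0; rewrite ler_norml => /andP[+ _]; lra.
Qed.

Lemma pb2_bound i :
  pb2 z i 0 <= M + Num.sqrt (N%:R * theta) + Num.sqrt (theta / lam2) * (theta / lam1).
Proof.
set u := ((pW z)^T *m pV z) i n0.
have [F_le _ _] := sublevel_bounds.
have sqr_le : (relu (u + pb2 z i 0) - X i n0) ^+ 2 <= N%:R * theta.
  by apply: le_trans (sqr_term_le_objF z i n0) _; rewrite ler_wpM2l ?ler0n.
have y_le : relu (u + pb2 z i 0) - X i n0 <= Num.sqrt (N%:R * theta).
  by apply: le_trans (ler_norm _) _; rewrite -sqrtr_sqr; apply: ler_wsqrtr.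
have X_le : `|X i n0| <= M.
  exact: le_trans (ler_sum_term i (fun k => normr_ge0 (X k n0))) (col_le_mnorm1 X n0).
have := relu_ge (u + pb2 z i 0); move: X_le; rewrite ler_norml => /andP[_ +].
by have := norm_WtV_bound i n0; rewrite -/u ler_norml => /andP[+ _]; lra.
Qed.

Lemma WX_le_alpha j n : (pW z *m X) j n <= alpha.
Proof.
have := alpha_ge_bias1 theta_ge0; have := norm_WX_bound j n; rewrite ler_norml => /andP[_].
by have := divr_ge0 theta_ge0 (ltW lam1_gt0); lra.
Qed.

Lemma WtV_le_alpha i n : ((pW z)^T *m pV z) i n <= alpha.
Proof.
have := alpha_ge_bias2 theta_ge0; have := norm_WtV_bound i n; rewrite ler_norml => /andP[_].
by have := mnorm1_ge0 X; have := sqrtr_ge0 (N%:R * theta); lra.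
Qed.

Lemma pb1_le_alpha j : pb1 z j 0 <= alpha.
Proof. exact: le_trans (pb1_bound j) (alpha_ge_bias1 theta_ge0). Qed.

Lemma pb2_le_alpha i : pb2 z i 0 <= alpha.
Proof. exact: le_trans (pb2_bound i) (alpha_ge_bias2 theta_ge0). Qed.

End Sublevel.

Definition clamp z : param :=
  Param (pW z) (map_mx (fun b => Num.max b (- alpha)) (pb1 z))
        (map_mx (fun b => Num.max b (- alpha)) (pb2 z)) (pV z).

Lemma clamp_Zset z : Omega_theta z -> Zset (clamp z).
Proof.
move=> z_theta; have [z2 _] := z_theta; have alpha0 := alpha_ge0 (theta_ge0 z_theta).
split; first by move=> n j /=; rewrite [map_mx _ _ j 0]mxE relu_addr_clamp ?WX_le_alpha ?z2.
by split=> [j|i] /=; rewrite mxE norm_clamp_le ?pb1_le_alpha ?pb2_le_alpha.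
Qed.

Lemma objO_clamp z : Omega_theta z -> objO (clamp z) = objO z.
Proof.
move=> z_theta; rewrite /objO /objF /objP /=; congr (_ * _ + _ + _ * _).
  apply: eq_bigr => n _; apply: eq_bigr => i _.
  by rewrite [map_mx _ _ i 0]mxE relu_addr_clamp ?WtV_le_alpha.
apply: eq_bigr => n _; apply: eq_bigr => j _.
by rewrite [map_mx _ _ j 0]mxE relu_addr_clamp ?WX_le_alpha.
Qed.

Lemma pdist_clamp z zb : Omega3 zb -> pdist (clamp z) zb <= pdist z zb.
Proof.
move=> [b1_zb b2_zb]; apply: ler_wsqrtr; rewrite lerD2r /=.
apply: lerD; first rewrite lerD2l.
  by apply: ler_frob2 => j k; rewrite !mxE (ord1 k) clamp_sqr_dist.
by apply: ler_frob2 => i k; rewrite !mxE (ord1 k) clamp_sqr_dist.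
Qed.

Lemma local_min_LRP_RP zb :
  Omega_theta zb -> local_min objO Zset zb -> local_min objO Omega2 zb.
Proof.
move=> [zb2 zbO] [[_ zb3] [eps [eps_gt0 min_zb]]]; split=> //.
exists eps; split=> // z z2 dz.
have [Oz_gt | Oz_le] := ltP theta (objO z); first exact: le_trans zbO (ltW Oz_gt).
have z_theta : Omega_theta z by [].
rewrite -(objO_clamp z_theta); apply: min_zb; first exact: clamp_Zset.
exact: le_lt_trans (pdist_clamp z zb3) dz.
Qed.

Definition proj z : param := Param (pW z) (pb1 z) (pb2 z) (hidden z).

Definition path z (t : R) : param :=
  Param (pW z) (pb1 z) (pb2 z) (hidden z + t *: (pV z - hidden z)).

Lemma proj_Omega1 z : Omega1 (proj z).
Proof. by move=> n j; rewrite mxE. Qed.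

Lemma path0 z : path z 0 = proj z.
Proof. by rewrite /path scale0r addr0. Qed.

Lemma path1 z : path z 1 = z.
Proof. by case: z => W b1 b2 V; rewrite /path scale1r addrC subrK. Qed.

Lemma pV_path z t j n : pV (path z t) j n = hidden z j n + t * (pV z j n - hidden z j n).
Proof. by rewrite !mxE. Qed.

Lemma path_Omega2 z t : Omega2 z -> 0 <= t -> Omega2 (path z t).
Proof.
move=> z2 t_ge0 n j; rewrite pV_path /= -hiddenE lerDl mulr_ge0 //.
by rewrite subr_ge0 hiddenE z2.
Qed.

Lemma slack_path z t : slack (path z t) = t * slack z.
Proof.
rewrite /slack mulr_sumr; apply: eq_bigr => n _; rewrite mulr_sumr.
by apply: eq_bigr => j _; rewrite pV_path hiddenE /=; ring.
Qed.

Lemma objR_path z t : objR (path z t) = objR (proj z) + t * (lam1 * slack z).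
Proof.
have sumV : \sum_(n < N) \sum_(j < N1) pV (path z t) j n
    = \sum_(n < N) \sum_(j < N1) hidden z j n + t * slack z.
  rewrite /slack mulr_sumr -big_split; apply: eq_bigr => n _ /=.
  by rewrite mulr_sumr -big_split; apply: eq_bigr => j _; rewrite pV_path hiddenE.
by rewrite /objR sumV /=; ring.
Qed.

Lemma objO_path z t :
  objO (path z t) = objF (path z t) + (objR (proj z) + t * ((lam1 + beta) * slack z)).
Proof. by rewrite /objO objR_path objP_slack slack_path; ring. Qed.

Lemma pdist_path z t : Omega2 z -> t <= 1 -> pdist (path z t) z <= (1 - t) * slack z.
Proof.
move=> z2 t_le1; have s_ge0 := slack_ge0 z2.
have D_ge0 j n : 0 <= (pV z - hidden z) j n by move: (z2 n j); rewrite !mxE subr_ge0.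
rewrite /pdist /= !subrr !frob2_0 !add0r.
have -> : hidden z + t *: (pV z - hidden z) - pV z = (t - 1) *: (pV z - hidden z).
  by apply/matrixP => j n; rewrite !mxE; ring.
rewrite frob2Z.
have t1_ge0 : 0 <= 1 - t by rewrite subr_ge0.
rewrite -(ger0_norm (mulr_ge0 t1_ge0 s_ge0)) -sqrtr_sqr; apply: ler_wsqrtr.
rewrite exprMn (_ : (t - 1) ^+ 2 = (1 - t) ^+ 2); last by ring.
by rewrite ler_wpM2l ?sqr_ge0 // slackE frob2_le_sqr_sum.
Qed.

Lemma lipschitz01_objO_path z : lipschitz01 (fun t => objO (path z t)).
Proof.
pose a i n := ((pW z)^T *m hidden z) i n + pb2 z i 0.
pose c i n := ((pW z)^T *m (pV z - hidden z)) i n.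
apply: (@eq_lipschitz01 _ _ (fun t =>
  N%:R^-1 * \sum_(n < N) \sum_(i < N0) (relu (a i n + t * c i n) + - X i n) ^+ 2
  + (objR (proj z) + t * ((lam1 + beta) * slack z)))).
  move=> t; rewrite objO_path /objF; congr (_ * _ + _).
  apply: eq_bigr => n _; apply: eq_bigr => i _.
  by rewrite /a /c /= mulmxDr -scalemxAr !mxE addrAC.
apply: lipschitz01D; last exact: lipschitz01_affine.
apply: lipschitz01M; apply: lipschitz01_sum => n; apply: lipschitz01_sum => i.
apply: lipschitz01_sqr; apply: lipschitz01D; last exact: lipschitz01_cst.
exact/lipschitz01_relu/lipschitz01_affine.
Qed.

Lemma hidden_dist z zb j n :
  `|(hidden z - hidden zb) j n| <= (M + 1) * pdist z zb.
Proof.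
rewrite mxsubE !hiddenE (le_trans (relu_dist_le _ _)) //.
have -> : (pW z *m X) j n + pb1 z j 0 - ((pW zb *m X) j n + pb1 zb j 0)
    = ((pW z - pW zb) *m X) j n + (pb1 z - pb1 zb) j 0.
  by rewrite mulmxBl !mxE; ring.
rewrite mulrDl mul1r (le_trans (ler_normD _ _)) // lerD ?norm_pb1_le_pdist //.
apply: le_trans (norm_mulmx_le _ _ (norm_pW_le_pdist z zb j)) _.
by rewrite [M * _]mulrC; apply: ler_wpM2l; [exact: pdist_ge0 | exact: col_le_mnorm1].
Qed.

Lemma pdist_proj z zb : Omega1 zb ->
  pdist (proj z) zb <= proj_const * pdist z zb.
Proof.
move=> zb1; set K := (N1 * N)%:R * (M + 1) ^+ 2.
have K_ge0 : 0 <= K by rewrite mulr_ge0 ?sqr_ge0.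
have V_le : frob2 (hidden z - pV zb) <= K * pdist z zb ^+ 2.
  rewrite (Omega1_hidden zb1) /K -mulrA -exprMn.
  by apply: frob2_le_bound => j n; apply: hidden_dist.
rewrite -(ger0_norm (pdist_ge0 z zb)) -sqrtr_sqr -sqrtrM ?addr_ge0 //.
apply: ler_wsqrtr; move: V_le; rewrite pdist_sqr /=.
have := frob2_ge0 (pV z - pV zb); lra.
Qed.

Section LipschitzPenalty.
Variables LF LR : R.
Hypotheses (LF_lip : @lipschitz_on R N N0 N1 objF Omega_theta LF)
  (LR_lip : @lipschitz_on R N N0 N1 objR Omega_theta LR) (LFR_lt_beta : LF + LR < beta).

(* Going from [path z t] to [z] the penalty rises by [beta (1 - t) slack z], more than
   the Lipschitz bound [(LF + LR) (1 - t) slack z] allows [objF + objR] to fall. *)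
Lemma objO_path_le z t : Omega_theta z -> 0 <= t <= 1 ->
  objO (path z t) <= theta -> objO (path z t) <= objO z.
Proof.
move=> z_theta /andP[t_ge0 t_le1] Ot_le; have [z2 _] := z_theta.
have zt_theta : Omega_theta (path z t) by split=> //; apply: path_Omega2.
have [LF_ge0 LFz] := LF_lip; have [LR_ge0 LRz] := LR_lip.
have := LFz _ _ zt_theta z_theta; have := LRz _ _ zt_theta z_theta.
rewrite !ler_norml => /andP[_ R_le] /andP[_ F_le].
have d_le := pdist_path z2 t_le1; have s_ge0 := slack_ge0 z2.
have := ler_wpM2l LF_ge0 d_le; have := ler_wpM2l LR_ge0 d_le.
have t1_ge0 : 0 <= 1 - t by rewrite subr_ge0.
have := ler_wpM2r (mulr_ge0 t1_ge0 s_ge0) (ltW LFR_lt_beta).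
by rewrite /objO !objP_slack slack_path; lra.
Qed.

Lemma objO_proj_le z : Omega2 z -> objO z < theta -> objO (proj z) <= objO z.
Proof.
move=> z2 Oz_lt; rewrite -path0 -{2}(path1 z).
apply: (@lipschitz01_no_gap_crossing _ (fun t => objO (path z t)) theta).
- exact: lipschitz01_objO_path.
- by rewrite path1.
- by move=> t t01 Ot_le; rewrite path1; apply: objO_path_le => //; split=> //; apply: ltW.
Qed.

Lemma local_min_R_RP zb : Omega_theta zb ->
  local_min (fun z => objF z + objR z) Omega1 zb -> local_min objO Omega2 zb.
Proof.
move=> [zb2 zbO] [zb1 [eps [eps_gt0 min_zb]]]; split=> //.
have C_gt0 : 0 < proj_const.
  by rewrite sqrtr_gt0; have := mulr_ge0 (ler0n R (N1 * N)) (sqr_ge0 (M + 1)); lra.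
exists (eps / proj_const); split=> [|z z2 dz]; first exact: divr_gt0.
have [Oz_ge | Oz_lt] := leP theta (objO z); first exact: le_trans zbO Oz_ge.
rewrite (objO_Omega1 zb1); apply: le_trans (objO_proj_le z2 Oz_lt).
rewrite (objO_Omega1 (proj_Omega1 z)); apply: min_zb; first exact: proj_Omega1.
apply: le_lt_trans (pdist_proj z zb1) _.
by rewrite -ltr_pdivlMl // mulrC.
Qed.

End LipschitzPenalty.
End Model.

(* The hypothesis [N%:R^-1 * frob2 X < theta] only makes [Omega_theta] nonempty
   (it contains [z = 0]); the argument does not need it. *)
Theorem corollary2p1 (R : realType) (N N0 N1 : nat)
  (X : 'M[R]_(N0, N)) (lam1 lam2 beta theta LF LR : R) :
  (0 < N)%N -> (0 < N0)%N -> (0 < N1)%N ->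
  0 < lam1 -> 0 < lam2 -> 0 < beta ->
  N%:R^-1 * frob2 X < theta ->
  @lipschitz_on R N N0 N1 (objF X) (Omega_theta X lam1 lam2 beta theta) LF ->
  @lipschitz_on R N N0 N1 (@objR R N N0 N1 lam1 lam2) (Omega_theta X lam1 lam2 beta theta) LR ->
  LF + LR < beta ->
  (forall zb : param R N N0 N1, Omega_theta X lam1 lam2 beta theta zb ->
     (local_min (fun z => objF X z + @objR R N N0 N1 lam1 lam2 z) (Omega1 X) zb \/
      local_min (objO X lam1 lam2 beta) (Zset X lam1 lam2 theta) zb) ->
     local_min (objO X lam1 lam2 beta) (Omega2 X) zb) /\
  (forall zb : param R N N0 N1,
     Omega_theta X lam1 lam2 beta theta zb -> Omega3 X lam1 lam2 theta zb ->
     local_min (objO X lam1 lam2 beta) (Omega2 X) zb ->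
     local_min (objO X lam1 lam2 beta) (Zset X lam1 lam2 theta) zb).
Proof.
move=> N_gt0 N0_gt0 N1_gt0 lam1_gt0 lam2_gt0 beta_gt0 _ LF_lip LR_lip LFR_lt_beta.
split=> [zb zb_theta [min_R | min_LRP] | zb [zb2 _] zb3 min_RP].
- exact: (local_min_R_RP LF_lip LR_lip LFR_lt_beta zb_theta min_R).
- exact: (local_min_LRP_RP N_gt0 N0_gt0 N1_gt0 lam1_gt0 lam2_gt0 beta_gt0 zb_theta min_LRP).
- by apply: local_min_sub min_RP => [z []|].
Qed.
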